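(* There exist constants $c>0$ and $r_*>0$, depending only on $m$ and $\{p_1,\dots,p_m\}$, such that for all $0<r<r_*$ and all real $y$ with $r^{2/3}<|y|\le\tfrac12$, the number of $h\in\mathcal S(r)$ with $\|hy\|\ge \frac{1}{3p_1}$ is at least $c(\log 1/r)^{m-1}$.
   Context: Fix an integer $m\ge 2$ and integers $1<p_1<\dots<p_m$ with $\gcd(p_i,p_j)=1$ for $i\neq j$; let $\mathcal S=\{p_1^{\alpha_1}\cdots p_m^{\alpha_m}:\alpha_i\in\mathbb Z_{\ge0}\}$ and $\mathcal S(r)=\{h\in\mathcal S: hr\le1\}$ for $r>0$. $\|x\|$ denotes the distance from the real number $x$ to the nearest integer. *)

From Stdlib Require Import Reals Lra Lia Arith List ZArith.
Open Scope R_scope.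

Fixpoint prod_pow (p alpha : nat -> nat) (k : nat) : nat :=
  match k with
  | O => 1%nat
  | S k' => (prod_pow p alpha k' * Nat.pow (p k) (alpha k))%nat
  end.

Definition inS (m : nat) (p : nat -> nat) (h : nat) : Prop :=
  exists alpha : nat -> nat, h = prod_pow p alpha m.

Definition inSr (m : nat) (p : nat -> nat) (r : R) (h : nat) : Prop :=
  inS m p h /\ INR h * r <= 1.

Definition dist_nint (x : R) : R :=
  Rmin (Rabs (x - IZR (Int_part x))) (Rabs (x - IZR (Int_part x + 1))).

(* Let [q = p_1] and let [t] range over the products of [p_2, ..., p_m] whose exponents
   are below [k ~ log(1/r)], so that [t < X = q^(s k)] with [s = p_m (m - 1)].  Multiplying
   by [q] multiplies [||x||] by [q] as long as it stays below [1/(3q)], so a window of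
   consecutive powers [q^i] always contains one with [||q^i t y|| >= 1/(3q)] once [||t y||]
   is not too small.  If [||t y|| >= q^-T] for all such [t], one window of length [T] per
   [t] gives [k^(m-1)] elements.  Otherwise take the least [t0] with [||t0 y|| < q^-T] and
   let [j] carry its largest exponent: for every [t] whose [p_j]-exponent is smaller than
   that of [t0], minimality and Gauss's lemma show that [t0] does not divide [t n0] ([n0]
   the integer nearest to [t0 y]), whence [||t q^e y|| >= 1/(2 t0)]; windows of length
   [log_q t0] then still give about [k^(m-1)] elements. *)

From Stdlib Require Import Reals Lra Lia Arith List ZArith.
From Stdlib Require Import Classical.
Import ListNotations.

Open Scope nat_scope.

Lemma coprime_mul_l (a b c : nat) :
  Nat.gcd a c = 1 -> Nat.gcd b c = 1 -> Nat.gcd (a * b) c = 1.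
Proof.
  intros Ha Hb. set (g := Nat.gcd (a * b) c).
  assert (Hgc : Nat.divide g c) by apply Nat.gcd_divide_r.
  assert (Hga : Nat.gcd g a = 1).
  { apply Nat.divide_1_r. rewrite <- Ha. apply Nat.gcd_greatest.
    - apply Nat.gcd_divide_r.
    - eapply Nat.divide_trans; [apply Nat.gcd_divide_l | exact Hgc]. }
  assert (Hgb : Nat.divide g b) by (eapply Nat.gauss; [apply Nat.gcd_divide_l | exact Hga]).
  apply Nat.divide_1_r. rewrite <- Hb. apply Nat.gcd_greatest; auto.
Qed.

Lemma coprime_1_l (c : nat) : Nat.gcd 1 c = 1.
Proof. apply Nat.divide_1_r, Nat.gcd_divide_l. Qed.

Lemma coprime_pow_l (a c e : nat) : Nat.gcd a c = 1 -> Nat.gcd (a ^ e) c = 1.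
Proof.
  intros H. induction e as [|e IH].
  - apply coprime_1_l.
  - rewrite Nat.pow_succ_r'. apply coprime_mul_l; assumption.
Qed.

Lemma Nat2Z_divide (a b : nat) : (Z.of_nat a | Z.of_nat b)%Z -> Nat.divide a b.
Proof.
  intros [z Hz]. destruct (Nat.eq_dec a 0) as [->|Ha].
  - exists 0. lia.
  - exists (Z.to_nat z). apply Nat2Z.inj. rewrite Nat2Z.inj_mul, Z2Nat.id; nia.
Qed.

Lemma Nat2Z_coprime (a b : nat) : Nat.gcd a b = 1 -> Z.gcd (Z.of_nat a) (Z.of_nat b) = 1%Z.
Proof.
  intros H. set (g := Z.gcd (Z.of_nat a) (Z.of_nat b)).
  assert (Hg0 : (0 <= g)%Z) by apply Z.gcd_nonneg.
  assert (Hd : Nat.divide (Z.to_nat g) (Nat.gcd a b)).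
  { apply Nat.gcd_greatest; apply Nat2Z_divide; rewrite Z2Nat.id by lia;
      [apply Z.gcd_divide_l | apply Z.gcd_divide_r]. }
  rewrite H in Hd. apply Nat.divide_1_r in Hd. lia.
Qed.

Lemma pow_pos_nat (q e : nat) : 0 < q -> 0 < q ^ e.
Proof. intros Hq. apply Nat.neq_0_lt_0, Nat.pow_nonzero. lia. Qed.

Lemma mul_pow_inj (q x x' a a' : nat) : 1 < q -> Nat.gcd x q = 1 -> Nat.gcd x' q = 1 ->
  x * q ^ a = x' * q ^ a' -> a = a' /\ x = x'.
Proof.
  intros Hq Hx Hx' E.
  assert (lt_absurd : forall x x' a a', Nat.gcd x q = 1 -> a < a' ->
            x * q ^ a = x' * q ^ a' -> False).
  { clear a a' E Hx Hx' x x'. intros x x' a a' Hx Hlt E.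
    replace a' with (a + S (a' - a - 1)) in E by lia.
    rewrite Nat.pow_add_r in E.
    assert (Ex : x = x' * q ^ S (a' - a - 1)).
    { apply (Nat.mul_cancel_r _ _ (q ^ a)); [generalize (pow_pos_nat q a); lia|].
      rewrite E. ring. }
    assert (Hdiv : Nat.divide q x) by (rewrite Ex; exists (x' * q ^ (a' - a - 1)); simpl; ring).
    assert (Nat.gcd x q = q) by (rewrite Nat.gcd_comm; apply Nat.divide_gcd_iff; exact Hdiv).
    lia. }
  destruct (lt_eq_lt_dec a a') as [[Hlt|<-]|Hgt].
  - exfalso; exact (lt_absurd x x' a a' Hx Hlt E).
  - split; auto. apply (Nat.mul_cancel_r _ _ (q ^ a)); [generalize (pow_pos_nat q a); lia|auto].
  - exfalso; exact (lt_absurd x' x a' a Hx' Hgt (eq_sym E)).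
Qed.

Definition upd (f : nat -> nat) (j a : nat) : nat -> nat :=
  fun l => if l =? j then a else f l.

Fixpoint exp_sum (al : nat -> nat) (n : nat) : nat :=
  match n with O => 0 | S n' => exp_sum al n' + al n end.

Section ProdPow.

Variable p : nat -> nat.

Lemma prod_pow_ext al be n : (forall l, 1 <= l <= n -> al l = be l) ->
  prod_pow p al n = prod_pow p be n.
Proof.
  induction n as [|n IH]; intros H; simpl; auto.
  rewrite IH by (intros; apply H; lia). rewrite (H (S n)) by lia. reflexivity.
Qed.

Lemma prod_pow_upd al j a n : 1 <= j <= n ->
  prod_pow p (upd al j a) n = p j ^ a * prod_pow p (upd al j 0) n.
Proof.
  induction n as [|n IH]; intros Hj; [lia|]. simpl.
  destruct (Nat.eq_dec j (S n)) as [->|Hne].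
  - unfold upd at 2 4. rewrite Nat.eqb_refl.
    rewrite (prod_pow_ext (upd al (S n) a) (upd al (S n) 0) n); [simpl; ring|].
    intros l Hl. unfold upd. destruct (Nat.eqb_spec l (S n)); [lia|auto].
  - rewrite IH by lia. unfold upd at 2 4. destruct (Nat.eqb_spec (S n) j); [lia|]. ring.
Qed.

Lemma prod_pow_split al j n : 1 <= j <= n ->
  prod_pow p al n = p j ^ al j * prod_pow p (upd al j 0) n.
Proof.
  intros Hj. rewrite <- prod_pow_upd by auto. apply prod_pow_ext.
  intros l _. unfold upd. destruct (Nat.eqb_spec l j); subst; auto.
Qed.

Lemma prod_pow_upd_first al i n : 1 <= n -> al 1 = 0 ->
  prod_pow p al n * p 1 ^ i = prod_pow p (upd al 1 i) n.
Proof.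
  intros Hn Ha. rewrite (prod_pow_split al 1 n), (prod_pow_upd al 1 i n), Ha by lia.
  simpl. ring.
Qed.

Lemma prod_pow_coprime al n c :
  (forall l, 1 <= l <= n -> al l = 0 \/ Nat.gcd (p l) c = 1) ->
  Nat.gcd (prod_pow p al n) c = 1.
Proof.
  induction n as [|n IH]; intros H; [apply coprime_1_l|]. simpl prod_pow.
  apply coprime_mul_l; [apply IH; intros; apply H; lia|].
  destruct (H (S n)) as [->|E]; [lia | apply coprime_1_l | apply coprime_pow_l, E].
Qed.

Lemma prod_pow_pos al n : (forall l, 1 <= l <= n -> 0 < p l) -> 0 < prod_pow p al n.
Proof.
  induction n as [|n IH]; intros H; simpl; auto.
  apply Nat.mul_pos_pos; [apply IH; intros; apply H; lia | apply pow_pos_nat, H; lia].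
Qed.

Lemma prod_pow_le_pow_sum al n P : (forall l, 1 <= l <= n -> p l <= P) ->
  prod_pow p al n <= P ^ exp_sum al n.
Proof.
  induction n as [|n IH]; intros H; simpl; auto.
  rewrite Nat.pow_add_r. apply Nat.mul_le_mono.
  - apply IH. intros; apply H; lia.
  - apply Nat.pow_le_mono_l, H. lia.
Qed.

Lemma prod_pow_zero al n : (forall l, 1 <= l <= n -> al l = 0) -> prod_pow p al n = 1.
Proof.
  induction n as [|n IH]; intros H; simpl; auto.
  rewrite IH by (intros; apply H; lia). rewrite (H (S n)) by lia. reflexivity.
Qed.

Lemma prod_pow_upd_lt al j a n : 1 <= j <= n -> (forall l, 1 <= l <= n -> 1 < p l) ->
  a < al j -> prod_pow p (upd al j a) n < prod_pow p al n.
Proof.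
  intros Hj Hp Ha. rewrite prod_pow_upd, (prod_pow_split al j n) by auto.
  apply Nat.mul_lt_mono_pos_r.
  - apply prod_pow_pos. intros l Hl. specialize (Hp l Hl). lia.
  - apply Nat.pow_lt_mono_r; auto.
Qed.

End ProdPow.

Lemma exp_sum_le al n K : 1 <= n -> al 1 = 0 -> (forall l, 2 <= l <= n -> al l <= K) ->
  exp_sum al n + K <= n * K.
Proof.
  induction n as [|n IH]; intros Hn H1 Hl; [lia|]. simpl exp_sum.
  destruct n as [|n]; [simpl; lia|].
  assert (exp_sum al (S n) + K <= S n * K) by (apply IH; [lia|auto|intros; apply Hl; lia]).
  specialize (Hl (S (S n)) ltac:(lia)). nia.
Qed.

Lemma le_double_windows s u k n : 1 <= s -> 1 <= u <= k -> s * k + 1 <= n ->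
  k <= 2 * u * (n / (s * u)).
Proof.
  intros Hs Hu Hn.
  assert (Hdm : n = s * u * (n / (s * u)) + n mod (s * u)) by (apply Nat.div_mod; nia).
  assert (n mod (s * u) < s * u) by (apply Nat.mod_upper_bound; nia).
  destruct (n / (s * u)) as [|nw]; nia.
Qed.

Definition pow_layer (q : nat) (xs : list nat) (n : nat) : list nat :=
  flat_map (fun x => map (fun a => x * q ^ a) (seq 0 n)) xs.

Fixpoint box (p bd : nat -> nat) (n : nat) : list nat :=
  match n with O => [1] | S n' => pow_layer (p n) (box p bd n') (bd n) end.

Fixpoint box_size (bd : nat -> nat) (n : nat) : nat :=
  match n with O => 1 | S n' => box_size bd n' * bd n end.

Lemma in_pow_layer q xs n z :
  In z (pow_layer q xs n) <-> exists x a, In x xs /\ a < n /\ z = x * q ^ a.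
Proof.
  unfold pow_layer. rewrite in_flat_map. split.
  - intros [x [Hx Hz]]. apply in_map_iff in Hz. destruct Hz as [a [Ha Hin]].
    apply in_seq in Hin. exists x, a. repeat split; auto; lia.
  - intros [x [a [Hx [Ha ->]]]]. exists x. split; auto.
    apply in_map_iff. exists a. split; auto. apply in_seq. lia.
Qed.

Lemma length_pow_layer q xs n : length (pow_layer q xs n) = length xs * n.
Proof.
  induction xs as [|x xs IH]; simpl; auto.
  unfold pow_layer in *. simpl. rewrite length_app, length_map, length_seq, IH. lia.
Qed.

Lemma NoDup_pow_layer q xs n : 1 < q -> NoDup xs -> (forall x, In x xs -> Nat.gcd x q = 1) ->
  NoDup (pow_layer q xs n).
Proof.
  intros Hq Hnd Hc. induction Hnd as [|x xs Hnin Hnd IH]; [constructor|].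
  assert (Hx : Nat.gcd x q = 1) by (apply Hc; left; auto).
  unfold pow_layer; simpl. apply NoDup_app.
  - apply NoDup_map_NoDup_ForallPairs; [|apply seq_NoDup].
    intros a a' _ _ E. apply (mul_pow_inj q x x a a'); auto.
  - apply IH. intros; apply Hc; right; auto.
  - intros z Hz Hz'. apply in_map_iff in Hz. destruct Hz as [a [<- _]].
    apply in_pow_layer in Hz'. destruct Hz' as [x' [a' [Hx' [_ E]]]].
    destruct (mul_pow_inj q x x' a a') as [_ <-]; auto. apply Hc; right; auto.
Qed.

Lemma in_box p bd n t : In t (box p bd n) ->
  exists al, (forall l, 1 <= l <= n -> al l < bd l) /\ t = prod_pow p al n.
Proof.
  revert t. induction n as [|n IH]; intros t Ht; simpl in Ht.
  - destruct Ht as [<-|[]]. exists (fun _ => 0). split; [intros; lia | reflexivity].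
  - apply in_pow_layer in Ht. destruct Ht as [x [a [Hx [Ha ->]]]].
    destruct (IH x Hx) as [al [Hal ->]].
    exists (upd al (S n) a). split.
    + intros l Hl. unfold upd. destruct (Nat.eqb_spec l (S n)); subst; auto. apply Hal; lia.
    + simpl. f_equal.
      * apply prod_pow_ext. intros l Hl. unfold upd. destruct (Nat.eqb_spec l (S n)); auto; lia.
      * unfold upd. rewrite Nat.eqb_refl. auto.
Qed.

Lemma length_box p bd n : length (box p bd n) = box_size bd n.
Proof. induction n as [|n IH]; simpl; auto. rewrite length_pow_layer, IH. auto. Qed.

Lemma NoDup_box p bd n m : n <= m -> (forall l, 1 <= l <= m -> 1 < p l) ->
  (forall i j, 1 <= i <= m -> 1 <= j <= m -> i <> j -> Nat.gcd (p i) (p j) = 1) ->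
  NoDup (box p bd n).
Proof.
  intros Hn Hp Hc. induction n as [|n IH]; simpl.
  - constructor; [simpl; auto | constructor].
  - apply NoDup_pow_layer; [apply Hp; lia | apply IH; lia|].
    intros x Hx. destruct (in_box p bd n x Hx) as [al [_ ->]].
    apply prod_pow_coprime. intros l Hl. right. apply Hc; lia.
Qed.

Definition box_bounds (j u k l : nat) : nat :=
  if l =? 1 then 1 else if l =? j then u else k.

Lemma box_size_bounds_below j u k n : 1 <= n < j -> box_size (box_bounds j u k) n = k ^ (n - 1).
Proof.
  induction n as [|n IH]; intros Hn; [lia|]. simpl box_size.
  destruct n as [|n]; [reflexivity|].
  rewrite IH by lia. unfold box_bounds.
  destruct (Nat.eqb_spec (S (S n)) 1); [lia|]. destruct (Nat.eqb_spec (S (S n)) j); [lia|].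
  replace (S (S n) - 1) with (S (S n - 1)) by lia. simpl. ring.
Qed.

Lemma box_size_bounds j u k n : 2 <= j <= n -> box_size (box_bounds j u k) n = u * k ^ (n - 2).
Proof.
  induction n as [|n IH]; intros Hn; [lia|]. simpl box_size.
  destruct (Nat.eq_dec j (S n)) as [->|Hne].
  - rewrite box_size_bounds_below by lia. unfold box_bounds.
    destruct (Nat.eqb_spec (S n) 1); [lia|]. rewrite Nat.eqb_refl.
    replace (S n - 2) with (n - 1) by lia. ring.
  - rewrite IH by lia. unfold box_bounds.
    destruct (Nat.eqb_spec (S n) 1); [lia|]. destruct (Nat.eqb_spec (S n) j); [lia|].
    replace (S n - 2) with (S (n - 2)) by lia. simpl. ring.
Qed.

Lemma length_filter_seq_windows (g : nat -> bool) W nw n : nw * W <= n ->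
  (forall w, w < nw -> exists i, w * W <= i < w * W + W /\ g i = true) ->
  nw <= length (filter g (seq 0 n)).
Proof.
  revert n. induction nw as [|nw IH]; intros n Hn Hw; [lia|].
  replace n with (nw * W + (W + (n - S nw * W))) by (simpl in Hn; lia).
  rewrite !seq_app, !filter_app, !length_app.
  assert (nw <= length (filter g (seq 0 (nw * W)))) by (apply IH; auto).
  assert (1 <= length (filter g (seq (0 + nw * W) W))).
  { destruct (Hw nw) as [i [Hi Hg]]; [lia|].
    assert (Hin : In i (filter g (seq (0 + nw * W) W))) by (apply filter_In; split; auto; apply in_seq; lia).
    destruct (filter g (seq (0 + nw * W) W)); simpl in *; [contradiction | lia]. }
  lia.
Qed.

Lemma length_filter_map (g : nat -> bool) (f : nat -> nat) l :
  length (filter g (map f l)) = length (filter (fun i => g (f i)) l).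
Proof. induction l as [|a l IH]; simpl; auto. destruct (g (f a)); simpl; auto. Qed.

Lemma length_filter_pow_layer (g : nat -> bool) q xs n W nw : nw * W <= n ->
  (forall x w, In x xs -> w < nw -> exists i, w * W <= i < w * W + W /\ g (x * q ^ i) = true) ->
  length xs * nw <= length (filter g (pow_layer q xs n)).
Proof.
  intros Hn H. induction xs as [|x xs IH]; simpl; [lia|].
  unfold pow_layer; simpl. rewrite filter_app, length_app. fold (pow_layer q xs n).
  rewrite length_filter_map.
  assert (nw <= length (filter (fun i => g (x * q ^ i)) (seq 0 n))).
  { apply length_filter_seq_windows with W; auto. intros; apply H; simpl; auto. }
  assert (length xs * nw <= length (filter g (pow_layer q xs n))) by (apply IH; intros; apply H; simpl; auto).
  lia.
Qed.

Open Scope R_scope.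

Lemma IZR_abs_ge_1 (z : Z) : z <> 0%Z -> 1 <= Rabs (IZR z).
Proof.
  intros H. destruct (Z_lt_le_dec z 0) as [Hl|Hl].
  - assert (IZR z <= -1) by (apply IZR_le; lia). rewrite Rabs_left by lra. lra.
  - assert (1 <= IZR z) by (apply IZR_le; lia). rewrite Rabs_right by lra. lra.
Qed.

Lemma dist_nint_le x (z : Z) : dist_nint x <= Rabs (x - IZR z).
Proof.
  unfold dist_nint. destruct (base_Int_part x) as [H1 H2]. set (f := Int_part x) in *.
  destruct (Z_le_gt_dec z f) as [Hz|Hz].
  - apply Rle_trans with (Rabs (x - IZR f)); [apply Rmin_l|].
    assert (IZR z <= IZR f) by (apply IZR_le; lia).
    rewrite !Rabs_right by lra. lra.
  - apply Rle_trans with (Rabs (x - IZR (f + 1))); [apply Rmin_r|].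
    assert (IZR (f + 1) <= IZR z) by (apply IZR_le; lia).
    rewrite plus_IZR in *. rewrite !Rabs_left1 by lra. lra.
Qed.

Lemma dist_nint_attained x : exists z : Z, dist_nint x = Rabs (x - IZR z).
Proof. unfold dist_nint, Rmin. destruct (Rle_dec _ _); eauto. Qed.

Lemma dist_nint_ge x d : (forall z : Z, d <= Rabs (x - IZR z)) -> d <= dist_nint x.
Proof. intros H. destruct (dist_nint_attained x) as [z ->]. auto. Qed.

Lemma dist_nint_small x : Rabs x <= 1/2 -> Rabs x <= dist_nint x.
Proof.
  intros Hx. apply dist_nint_ge. intros z.
  destruct (Z.eq_dec z 0) as [->|Hz]; [rewrite Rminus_0_r; lra|].
  apply IZR_abs_ge_1 in Hz. rewrite Rabs_minus_sym.
  generalize (Rabs_triang_inv (IZR z) x). lra.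
Qed.

(* While [q ||x||] stays below [1/3], the nearest integer to [q x] is [q] times that of [x]. *)
Lemma dist_nint_mul_nat (q : nat) x : (1 <= q)%nat -> dist_nint x < 1 / (3 * INR q) ->
  INR q * dist_nint x <= dist_nint (INR q * x).
Proof.
  intros Hq Hd. assert (Hq' : 1 <= INR q) by (apply (le_INR 1); auto).
  destruct (dist_nint_attained x) as [n Hn].
  assert (Hqd : INR q * dist_nint x < 1/3).
  { apply Rmult_lt_compat_l with (r := INR q) in Hd; [|lra].
    replace (INR q * (1 / (3 * INR q))) with (1/3) in Hd by (field; lra). lra. }
  assert (Hqn : Rabs (INR q * x - IZR (Z.of_nat q * n)) = INR q * dist_nint x).
  { rewrite mult_IZR, <- INR_IZR_INZ, Hn, <- Rmult_minus_distr_l, Rabs_mult.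
    rewrite (Rabs_right (INR q)) by lra. reflexivity. }
  apply dist_nint_ge. intros z.
  destruct (Z.eq_dec z (Z.of_nat q * n)) as [->|Hne]; [lra|].
  assert (H1 : 1 <= Rabs (IZR (Z.of_nat q * n) - IZR z)) by (rewrite <- minus_IZR; apply IZR_abs_ge_1; lia).
  generalize (Rabs_triang (IZR (Z.of_nat q * n) - INR q * x) (INR q * x - IZR z)).
  rewrite Rabs_minus_sym in Hqn.
  replace (IZR (Z.of_nat q * n) - INR q * x + (INR q * x - IZR z))
    with (IZR (Z.of_nat q * n) - IZR z) by ring.
  lra.
Qed.

(* Multiplying by [q] scales small distances by [q], so within [W] steps the distance
   must exceed [1/(3q)] once [q^W d >= 1/3]. *)
Lemma dist_nint_escape (q : nat) x d W : (1 <= q)%nat -> (1 <= W)%nat -> d <= dist_nint x ->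
  1/3 <= INR q ^ W * d ->
  exists i, (i < W)%nat /\ dist_nint (INR q ^ i * x) >= 1 / (3 * INR q).
Proof.
  intros Hq HW Hx HqW. assert (Hq' : 1 <= INR q) by (apply (le_INR 1); auto).
  apply NNPP. intros Hno.
  assert (Hsmall : forall i, (i < W)%nat -> dist_nint (INR q ^ i * x) < 1 / (3 * INR q)).
  { intros i Hi. apply Rnot_ge_lt. intros Hge. apply Hno. exists i; auto. }
  assert (Hgrow : forall i, (i < W)%nat -> INR q ^ i * d <= dist_nint (INR q ^ i * x)).
  { induction i as [|i IH]; intros Hi; [simpl; rewrite !Rmult_1_l; exact Hx|].
    simpl. rewrite !Rmult_assoc.
    apply Rle_trans with (INR q * dist_nint (INR q ^ i * x)).
    - apply Rmult_le_compat_l; [lra | apply IH; lia].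
    - apply dist_nint_mul_nat; auto. apply Hsmall. lia. }
  specialize (Hgrow (W - 1)%nat ltac:(lia)). specialize (Hsmall (W - 1)%nat ltac:(lia)).
  replace W with (S (W - 1)) in HqW by lia. simpl in HqW.
  assert (INR q * (INR q ^ (W - 1) * d) < INR q * (1 / (3 * INR q))) by (apply Rmult_lt_compat_l; lra).
  replace (INR q * (1 / (3 * INR q))) with (1/3) in H by (field; lra). lra.
Qed.

(* If [t0 y] is close to the integer [n0], then [h y] is close to [h n0 / t0]; whether
   this is an integer decides whether [h y] is close to an integer. *)
Lemma dist_nint_divides (t0 h : nat) (n0 : Z) y : (0 < t0)%nat ->
  (Z.of_nat t0 | Z.of_nat h * n0)%Z ->
  dist_nint (INR h * y) <= INR h * Rabs (INR t0 * y - IZR n0) / INR t0.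
Proof.
  intros Ht [c Hc]. assert (Ht' : 0 < INR t0) by (apply lt_0_INR; auto).
  apply IZR_eq in Hc. rewrite !mult_IZR, <- !INR_IZR_INZ in Hc.
  apply Rle_trans with (Rabs (INR h * y - IZR c)); [apply dist_nint_le|].
  replace (INR h * y - IZR c) with (INR h * (INR t0 * y - IZR n0) / INR t0)
    by (apply (Rmult_eq_reg_r (INR t0)); [|lra]; field_simplify; [rewrite Hc; ring | lra]).
  unfold Rdiv. rewrite !Rabs_mult, Rabs_right by (apply Rle_ge, pos_INR).
  rewrite (Rabs_right (/ INR t0)) by (apply Rle_ge, Rlt_le, Rinv_0_lt_compat; auto). lra.
Qed.

Lemma dist_nint_not_divides (t0 h : nat) (n0 : Z) y : (0 < t0)%nat ->
  ~ (Z.of_nat t0 | Z.of_nat h * n0)%Z ->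
  INR h * Rabs (INR t0 * y - IZR n0) <= 1/4 ->
  1 / (2 * INR t0) <= dist_nint (INR h * y).
Proof.
  intros Ht Hnd Hs. assert (Ht' : 0 < INR t0) by (apply lt_0_INR; auto).
  apply dist_nint_ge. intros z.
  assert (Hne : (Z.of_nat h * n0 - z * Z.of_nat t0)%Z <> 0%Z) by (intros E; apply Hnd; exists z; lia).
  apply IZR_abs_ge_1 in Hne. rewrite minus_IZR, !mult_IZR, <- !INR_IZR_INZ in Hne.
  set (d := INR t0 * y - IZR n0) in *.
  set (e := INR h * IZR n0 - IZR z * INR t0) in *.
  replace (INR h * y - IZR z) with ((e + INR h * d) / INR t0) by (unfold e, d; field; lra).
  assert (Rabs (INR h * d) <= 1/4) by (rewrite Rabs_mult, Rabs_right by (apply Rle_ge, pos_INR); auto).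
  assert (Habs : 1/2 <= Rabs (e + INR h * d)).
  { generalize (Rabs_triang (e + INR h * d) (- (INR h * d))).
    rewrite Rabs_Ropp. replace (e + INR h * d + - (INR h * d)) with e by ring. lra. }
  unfold Rdiv. rewrite Rabs_mult, (Rabs_right (/ INR t0)) by (apply Rle_ge, Rlt_le, Rinv_0_lt_compat; auto).
  apply Rmult_le_compat_r with (r := / INR t0) in Habs; [|apply Rlt_le, Rinv_0_lt_compat; auto].
  replace (1 * / (2 * INR t0)) with (1/2 * / INR t0) by (field; lra). exact Habs.
Qed.

Definition far_nint (q : nat) (y : R) (h : nat) : Prop := dist_nint (INR h * y) >= 1 / (3 * INR q).

Lemma INR_mul_pow_mul (t q i : nat) y : INR (t * q ^ i) * y = INR q ^ i * (INR t * y).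
Proof. rewrite mult_INR, pow_INR. ring. Qed.

Lemma exists_least_nat (P : nat -> Prop) : (exists n, P n) ->
  exists n, P n /\ forall n', (n' < n)%nat -> ~ P n'.
Proof.
  intros [n Hn]. induction n as [n IH] using (well_founded_induction lt_wf).
  destruct (classic (exists n', (n' < n)%nat /\ P n')) as [[n' [Hlt Hn']]|Hno].
  - exact (IH n' Hlt Hn').
  - exists n. split; auto. intros n' Hlt Hn'. apply Hno. eauto.
Qed.

Lemma exists_argmax (f : nat -> nat) a b : (a <= b)%nat ->
  exists j, (a <= j <= b)%nat /\ forall l, (a <= l <= b)%nat -> (f l <= f j)%nat.
Proof.
  induction b as [|b IH]; intros Hab.
  - exists 0%nat. split; [lia|]. intros l Hl. replace l with 0%nat by lia. lia.
  - destruct (Nat.eq_dec a (S b)) as [->|Ha].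
    + exists (S b). split; [lia|]. intros l Hl. replace l with (S b) by lia. lia.
    + destruct IH as [j [Hj Hmax]]; [lia|].
      destruct (le_lt_dec (f (S b)) (f j)) as [Hle|Hlt].
      * exists j. split; [lia|]. intros l Hl.
        destruct (Nat.eq_dec l (S b)) as [->|]; [auto | apply Hmax; lia].
      * exists (S b). split; [lia|]. intros l Hl.
        destruct (Nat.eq_dec l (S b)) as [->|]; [lia|]. specialize (Hmax l ltac:(lia)). lia.
Qed.

Section GoodElements.

Open Scope nat_scope.

Variables (m : nat) (p : nat -> nat).
Hypothesis Hp : forall l, 1 <= l <= m -> 1 < p l.
Hypothesis Hcop : forall i j, 1 <= i <= m -> 1 <= j <= m -> i <> j -> Nat.gcd (p i) (p j) = 1.

(* Gauss's lemma, since [p_j] is coprime to every other [p_l]. *)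
Lemma divides_lower_exponent be ga j (n0 : Z) : 1 <= j <= m -> ga j < be j ->
  (Z.of_nat (prod_pow p be m) | Z.of_nat (prod_pow p ga m) * n0)%Z ->
  (Z.of_nat (prod_pow p be m) | Z.of_nat (prod_pow p (upd be j (ga j)) m) * n0)%Z.
Proof.
  intros Hj Hlt Hd.
  set (a := ga j) in *. set (b := be j) in *.
  set (R := prod_pow p (upd be j 0) m). set (H := prod_pow p (upd ga j 0) m).
  assert (Ebe : prod_pow p be m = p j ^ a * p j ^ (b - a) * R).
  { rewrite (prod_pow_split p be j m Hj), <- Nat.pow_add_r.
    replace (a + (b - a)) with b by lia. reflexivity. }
  assert (Ega : prod_pow p ga m = p j ^ a * H) by (apply prod_pow_split; auto).
  assert (Eupd : prod_pow p (upd be j a) m = p j ^ a * R) by (apply prod_pow_upd; auto).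
  assert (Hcoprime : Nat.gcd (p j ^ (b - a)) H = 1).
  { apply coprime_pow_l. rewrite Nat.gcd_comm. apply prod_pow_coprime.
    intros l Hl. unfold upd. destruct (Nat.eqb_spec l j); [left; auto | right; apply Hcop; lia]. }
  apply Nat2Z_coprime in Hcoprime.
  rewrite Ebe, Ega in Hd. rewrite Ebe, Eupd.
  rewrite !Nat2Z.inj_mul in *.
  set (A := Z.of_nat (p j ^ a)) in *. set (E := Z.of_nat (p j ^ (b - a))) in *.
  assert (HA : A <> 0%Z) by (generalize (pow_pos_nat (p j) a ltac:(specialize (Hp j Hj); lia)); lia).
  assert (Hd' : (A * E | A * (Z.of_nat H * n0))%Z).
  { apply Z.divide_trans with (A * E * Z.of_nat R)%Z; [exists (Z.of_nat R); ring|].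
    replace (A * (Z.of_nat H * n0))%Z with (A * Z.of_nat H * n0)%Z by ring. exact Hd. }
  apply Z.mul_divide_cancel_l, Z.gauss in Hd'; auto.
  destruct Hd' as [c ->]. exists c. ring.
Qed.

Lemma good_elements_from_windows (r y : R) bd n nw W :
  1 <= m -> bd 1 = 1 -> nw * W <= n ->
  (forall t i, In t (box p bd m) -> i < n -> (INR (t * p 1 ^ i) * r <= 1)%R) ->
  (forall t w, In t (box p bd m) -> w < nw ->
     exists i, w * W <= i < w * W + W /\ far_nint (p 1) y (t * p 1 ^ i)) ->
  exists L, NoDup L /\ (forall h, In h L -> inSr m p r h /\ far_nint (p 1) y h) /\
    box_size bd m * nw <= length L.
Proof.
  intros Hm Hbd1 Hn Hsize Hwin.
  set (g := fun h => if Rge_dec (dist_nint (INR h * y)) (1 / (3 * INR (p 1))) then true else false).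
  assert (Hfirst : forall t, In t (box p bd m) -> exists al, al 1 = 0 /\ t = prod_pow p al m).
  { intros t Ht. destruct (in_box p bd m t Ht) as [al [Hb ->]]. exists al.
    specialize (Hb 1 ltac:(lia)). split; [lia | auto]. }
  exists (filter g (pow_layer (p 1) (box p bd m) n)). split; [|split].
  - apply NoDup_filter, NoDup_pow_layer; [apply Hp; lia | apply NoDup_box with m; auto|].
    intros x Hx. destruct (Hfirst x Hx) as [al [H1 ->]]. apply prod_pow_coprime.
    intros l Hl. destruct (Nat.eq_dec l 1) as [->|]; [left; auto | right; apply Hcop; lia].
  - intros h Hh. apply filter_In in Hh. destruct Hh as [Hh Hg].
    unfold g in Hg. destruct (Rge_dec _ _) as [Hge|]; [|discriminate].
    split; [|exact Hge]. apply in_pow_layer in Hh. destruct Hh as [t [i [Ht [Hi ->]]]].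
    split; [|apply Hsize; auto].
    destruct (Hfirst t Ht) as [al [H1 ->]]. exists (upd al 1 i). apply prod_pow_upd_first; lia.
  - rewrite <- (length_box p bd m). apply length_filter_pow_layer with W; auto.
    intros x w Hx Hw. destruct (Hwin x w Hx Hw) as [i [Hi Hd]]. exists i. split; auto.
    unfold g. destruct (Rge_dec _ _); auto.
Qed.

Hypothesis Hm : 2 <= m.
Hypothesis Hp_le_last : forall l, 1 <= l <= m -> p l <= p m.

Let q := p 1.
Let s := p m * (m - 1).

Lemma q_gt_1 : 1 < q.
Proof. apply Hp. lia. Qed.

(* Each [p_l] is at most [p_m <= q^(p_m)], which gives [p_m^((m-1) b) <= q^(s b)]. *)
Lemma prod_pow_le_first_pow al b : al 1 = 0 -> (forall l, 2 <= l <= m -> al l <= b) ->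
  prod_pow p al m <= q ^ (s * b).
Proof.
  intros H1 Hb.
  assert (Hlast : p m <= q ^ p m) by (apply Nat.lt_le_incl, Nat.pow_gt_lin_r, q_gt_1).
  assert (Hsum : exp_sum al m + b <= m * b) by (apply exp_sum_le; auto; lia).
  apply Nat.le_trans with (p m ^ exp_sum al m); [apply prod_pow_le_pow_sum; auto|].
  apply Nat.le_trans with (p m ^ ((m - 1) * b)).
  { apply Nat.pow_le_mono_r; [specialize (Hp m ltac:(lia)); lia | nia]. }
  apply Nat.le_trans with ((q ^ p m) ^ ((m - 1) * b)); [apply Nat.pow_le_mono_l; auto|].
  rewrite <- Nat.pow_mul_r. unfold s. rewrite Nat.mul_assoc. auto.
Qed.

Variables (r y : R) (k T : nat).
Hypothesis Hr : (0 < r)%R.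
Hypothesis Hk : 1 <= k.
Hypothesis HT : 2 * s * k + 2 <= T.
Hypothesis Hsize : (INR q ^ (T - 1 + s * k) * r <= 1)%R.
Hypothesis Hy : (/ INR q ^ T <= dist_nint y)%R.

Let X := q ^ (s * k).
Let theta := (/ INR q ^ T)%R.

Lemma in_box_lt bd t : bd 1 = 1 -> (forall l, 2 <= l <= m -> bd l <= k) -> In t (box p bd m) ->
  exists al, al 1 = 0 /\ (forall l, 1 <= l <= m -> al l < bd l) /\ t = prod_pow p al m /\ t < X.
Proof.
  intros Hb1 Hbk Ht. destruct (in_box p bd m t Ht) as [al [Hal ->]].
  assert (H1 : al 1 = 0) by (specialize (Hal 1 ltac:(lia)); lia).
  exists al. repeat split; auto.
  apply Nat.le_lt_trans with (q ^ (s * (k - 1))).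
  - apply prod_pow_le_first_pow; auto. intros l Hl. specialize (Hal l ltac:(lia)). specialize (Hbk l Hl). lia.
  - apply Nat.pow_lt_mono_r; [apply q_gt_1|]. unfold s. specialize (Hp m ltac:(lia)). nia.
Qed.

Lemma lt_X_in_Sr t e : t < X -> e < T -> (INR (t * q ^ e) * r <= 1)%R.
Proof.
  intros Ht He.
  assert (Hle : t * q ^ e <= q ^ (T - 1 + s * k)).
  { rewrite Nat.pow_add_r, Nat.mul_comm. apply Nat.mul_le_mono; [|unfold X in Ht; lia].
    apply Nat.pow_le_mono_r; [generalize q_gt_1; lia | lia]. }
  apply le_INR in Hle. rewrite pow_INR in Hle.
  nra.
Qed.

Definition resonant t :=
  (exists be, be 1 = 0 /\ t = prod_pow p be m) /\ t < X /\ (dist_nint (INR t * y) < theta)%R.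

Lemma theta_pow : (INR q ^ T * theta = 1)%R.
Proof.
  unfold theta. field. apply pow_nonzero.
  generalize (lt_INR 1 q q_gt_1). simpl. lra.
Qed.

Lemma good_elements_nonresonant : (forall t, ~ resonant t) ->
  exists L, NoDup L /\ (forall h, In h L -> inSr m p r h /\ far_nint q y h) /\
    k ^ (m - 1) <= 2 * length L.
Proof.
  intros Hnres.
  assert (Hbd : forall l, 2 <= l <= m -> box_bounds 2 k k l <= k).
  { intros l _. unfold box_bounds. destruct (l =? 1); [lia|]. destruct (l =? 2); lia. }
  destruct (good_elements_from_windows r y (box_bounds 2 k k) T 1 T) as [L [HL1 [HL2 HL3]]];
    auto; try lia.
  - intros t i Ht Hi. destruct (in_box_lt _ t eq_refl Hbd Ht) as [al [_ [_ [_ HtX]]]].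
    apply lt_X_in_Sr; auto.
  - intros t w Ht Hw. replace w with 0 by lia.
    destruct (in_box_lt _ t eq_refl Hbd Ht) as [al [Ha1 [_ [Hal HtX]]]].
    assert (Htheta : (theta <= dist_nint (INR t * y))%R).
    { apply Rnot_lt_le. intros Hlt. apply (Hnres t). repeat split; eauto. }
    destruct (dist_nint_escape q (INR t * y) theta T) as [i [Hi Hfar]];
      [generalize q_gt_1; lia | lia | exact Htheta | rewrite theta_pow; lra |].
    exists i. split; [lia|]. unfold far_nint. rewrite INR_mul_pow_mul. exact Hfar.
  - exists L. split; auto. split; auto.
    rewrite box_size_bounds in HL3 by lia.
    replace (m - 1) with (S (m - 2)) by lia. simpl. lia.
Qed.

Section Resonant.

Variables (t0 : nat) (be : nat -> nat) (j : nat) (n0 : Z).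
Hypothesis Hbe1 : be 1 = 0.
Hypothesis Ht0 : t0 = prod_pow p be m.
Hypothesis Ht0X : t0 < X.
Hypothesis Hn0 : (Rabs (INR t0 * y - IZR n0) < theta)%R.
Hypothesis Hmin : forall t, t < t0 -> ~ resonant t.
Hypothesis Hj : 2 <= j <= m.
Hypothesis Hjmax : forall l, 2 <= l <= m -> be l <= be j.

Let u := Nat.min (be j) k.
Let W := s * u.

Lemma t0_pos : 0 < t0.
Proof. rewrite Ht0. apply prod_pow_pos. intros l Hl. specialize (Hp l Hl). lia. Qed.

Lemma resonant_exponent_pos : 1 <= be j.
Proof.
  destruct (Nat.eq_dec (be j) 0) as [Hb0|]; [exfalso|lia].
  assert (E : t0 = 1).
  { rewrite Ht0. apply prod_pow_zero. intros l Hl.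
    destruct (Nat.eq_dec l 1) as [->|]; auto. specialize (Hjmax l ltac:(lia)). lia. }
  generalize (dist_nint_le (INR t0 * y) n0). rewrite E in *. rewrite INR_1, Rmult_1_l in *.
  unfold theta in Hn0. lra.
Qed.

Lemma resonant_le_pow_window : t0 <= q ^ W.
Proof.
  unfold W, u. destruct (le_lt_dec (be j) k) as [Hbk|Hkb].
  - rewrite Nat.min_l by lia. rewrite Ht0. apply prod_pow_le_first_pow; auto.
  - rewrite Nat.min_r by lia. unfold X in Ht0X. lia.
Qed.

(* Otherwise lowering the [p_j]-exponent of [t0] yields a smaller resonant element. *)
Lemma resonant_not_divides t i : In t (box p (box_bounds j u k) m) ->
  ~ (Z.of_nat t0 | Z.of_nat (t * q ^ i) * n0)%Z.
Proof.
  intros Ht Hd.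
  assert (Hbd : forall l, 2 <= l <= m -> box_bounds j u k l <= k).
  { intros l Hl. unfold box_bounds. destruct (l =? 1); [lia|]. destruct (l =? j); lia. }
  destruct (in_box_lt _ t eq_refl Hbd Ht) as [al [Ha1 [Hal [-> _]]]].
  unfold q in Hd. rewrite prod_pow_upd_first, Ht0 in Hd by (auto; lia).
  assert (Hlt : upd al 1 i j < be j).
  { specialize (Hal j ltac:(lia)). unfold upd, box_bounds in *.
    destruct (Nat.eqb_spec j 1); [lia|]. rewrite Nat.eqb_refl in Hal. lia. }
  apply (divides_lower_exponent be (upd al 1 i) j n0 ltac:(lia) Hlt) in Hd.
  rewrite <- Ht0 in Hd.
  set (h := prod_pow p (upd be j (upd al 1 i j)) m) in Hd.
  assert (Hh : h < t0) by (rewrite Ht0; apply prod_pow_upd_lt; auto; lia).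
  apply (Hmin h Hh). split; [|split].
  - exists (upd be j (upd al 1 i j)). split; auto. unfold upd. destruct (Nat.eqb_spec 1 j); [lia|auto].
  - lia.
  - assert (Ht0R : (0 < INR t0)%R) by (apply lt_0_INR, t0_pos).
    assert (HhR : (INR h <= INR t0)%R) by (apply le_INR; lia).
    eapply Rle_lt_trans; [apply dist_nint_divides; [apply t0_pos | exact Hd]|].
    apply Rle_lt_trans with (Rabs (INR t0 * y - IZR n0)); [|exact Hn0].
    apply (Rmult_le_reg_r (INR t0)); auto. unfold Rdiv.
    rewrite Rmult_assoc, Rinv_l, Rmult_1_r by lra.
    rewrite Rmult_comm. apply Rmult_le_compat_l; [apply Rabs_pos | exact HhR].
Qed.

Lemma resonant_far_from_int t e : In t (box p (box_bounds j u k) m) ->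
  t * q ^ e <= q ^ (T - 2) -> (1 / (2 * INR t0) <= dist_nint (INR (t * q ^ e) * y))%R.
Proof.
  intros Ht Hh. apply (dist_nint_not_divides t0 _ n0); [apply t0_pos | apply resonant_not_divides; auto|].
  apply le_INR in Hh. rewrite pow_INR in Hh.
  assert (HQ : (2 <= INR q)%R) by (apply (le_INR 2), q_gt_1).
  assert (HQT : (INR q ^ (T - 2) * theta = / INR q ^ 2)%R).
  { unfold theta. replace T with (T - 2 + 2) at 2 by lia. rewrite pow_add.
    field. split; [lra | apply pow_nonzero; lra]. }
  assert (HQ2 : (/ INR q ^ 2 <= / 4)%R) by (apply Rinv_le_contravar; simpl; nra).
  assert (INR (t * q ^ e) * Rabs (INR t0 * y - IZR n0) <= INR q ^ (T - 2) * theta)%R.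
  { apply Rmult_le_compat; [apply pos_INR | apply Rabs_pos | exact Hh | lra]. }
  lra.
Qed.

Lemma good_elements_resonant :
  exists L, NoDup L /\ (forall h, In h L -> inSr m p r h /\ far_nint q y h) /\
    k ^ (m - 1) <= 2 * length L.
Proof.
  assert (Hu : 1 <= u <= k) by (generalize resonant_exponent_pos; unfold u; lia).
  assert (Hs : 1 <= s) by (unfold s; specialize (Hp m ltac:(lia)); nia).
  assert (HW : 1 <= W) by (unfold W; nia).
  assert (Hbd : forall l, 2 <= l <= m -> box_bounds j u k l <= k).
  { intros l Hl. unfold box_bounds. destruct (l =? 1); [lia|]. destruct (l =? j); lia. }
  set (n := T - s * k - 1).
  destruct (good_elements_from_windows r y (box_bounds j u k) n (n / W) W) as [L [HL1 [HL2 HL3]]];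
    auto; try lia.
  - rewrite Nat.mul_comm. apply Nat.Div0.mul_div_le.
  - intros t i Ht Hi. destruct (in_box_lt _ t eq_refl Hbd Ht) as [al [_ [_ [_ HtX]]]].
    apply lt_X_in_Sr; [auto | unfold n in Hi; lia].
  - intros t w Ht Hw. destruct (in_box_lt _ t eq_refl Hbd Ht) as [al [_ [_ [_ HtX]]]].
    assert (Hwn : w * W + W <= n).
    { apply Nat.le_trans with (n / W * W); [nia|]. rewrite Nat.mul_comm. apply Nat.Div0.mul_div_le. }
    assert (Hh : t * q ^ (w * W) <= q ^ (T - 2)).
    { apply Nat.le_trans with (q ^ (s * k) * q ^ (w * W)); [apply Nat.mul_le_mono_r; unfold X in HtX; lia|].
      rewrite <- Nat.pow_add_r. apply Nat.pow_le_mono_r; [generalize q_gt_1 | unfold n in Hwn]; lia. }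
    assert (Ht0R : (0 < INR t0)%R) by (apply lt_0_INR, t0_pos).
    assert (HqW : (INR t0 <= INR q ^ W)%R) by (rewrite <- pow_INR; apply le_INR, resonant_le_pow_window).
    destruct (dist_nint_escape q (INR (t * q ^ (w * W)) * y) (1 / (2 * INR t0)) W) as [i [Hi Hfar]];
      [generalize q_gt_1; lia | lia | apply resonant_far_from_int; auto |
       apply Rle_trans with (INR t0 * (1 / (2 * INR t0)))%R;
       [replace (INR t0 * (1 / (2 * INR t0)))%R with (1 / 2)%R by (field; lra); lra | apply Rmult_le_compat_r; [apply Rlt_le, Rdiv_lt_0_compat; lra | exact HqW]] |].
    exists (w * W + i). split; [lia|]. unfold far_nint.
    rewrite Nat.pow_add_r, Nat.mul_assoc, INR_mul_pow_mul. exact Hfar.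
  - exists L. split; auto. split; auto.
    rewrite box_size_bounds in HL3 by lia.
    assert (Hcount : k <= 2 * u * (n / W)) by (apply le_double_windows; unfold n; lia).
    replace (m - 1) with (S (m - 2)) by lia. simpl. nia.
Qed.

End Resonant.

Lemma good_elements_count :
  exists L, NoDup L /\ (forall h, In h L -> inSr m p r h /\ far_nint q y h) /\
    k ^ (m - 1) <= 2 * length L.
Proof.
  destruct (classic (exists t, resonant t)) as [Hres|Hnres].
  - destruct (exists_least_nat _ Hres) as [t0 [[[be [Hbe1 Ht0]] [Ht0X Ht0y]] Hmin]].
    destruct (exists_argmax be 2 m Hm) as [j [Hj Hjmax]].
    destruct (dist_nint_attained (INR t0 * y)) as [n0 Hn0]. rewrite Hn0 in Ht0y.
    exact (good_elements_resonant t0 be j n0 Hbe1 Ht0 Ht0X Ht0y Hmin Hj Hjmax).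
  - apply good_elements_nonresonant. intros t Ht. apply Hnres. eauto.
Qed.

End GoodElements.

Open Scope R_scope.

Lemma exists_nat_floor x : 0 <= x -> exists n : nat, INR n <= x < INR n + 1.
Proof.
  intros Hx. destruct (base_Int_part x) as [H1 H2].
  assert (H0 : (-1 < Int_part x)%Z) by (apply lt_IZR; simpl; lra).
  exists (Z.to_nat (Int_part x)). rewrite INR_IZR_INZ, Z2Nat.id by lia. lra.
Qed.

(* For [a > 12 s] take [k = floor(a / 3s) - 1] and [T = floor(2a / 3) + 1]. *)
Lemma exists_exponents (s : nat) a : (1 <= s)%nat -> 12 * INR s < a ->
  exists k T : nat, (1 <= k)%nat /\ a / (6 * INR s) <= INR k /\ (2 * s * k + 2 <= T)%nat /\
    INR (T - 1 + s * k) <= a /\ 2 * a <= 3 * INR T.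
Proof.
  intros Hs Ha. assert (HsR : 1 <= INR s) by (apply (le_INR 1); auto).
  destruct (exists_nat_floor (a / (3 * INR s))) as [k0 [Hk0 Hk0']];
    [apply Rlt_le, Rdiv_lt_0_compat; lra|].
  destruct (exists_nat_floor (2 * a / 3)) as [T0 [HT0 HT0']]; [lra|].
  assert (Hsk0 : INR s * INR k0 <= a / 3).
  { apply (Rmult_le_compat_l (INR s)) in Hk0; [|lra].
    replace (INR s * (a / (3 * INR s))) with (a / 3) in Hk0 by (field; lra). exact Hk0. }
  assert (Hk0gt : 4 < a / (3 * INR s)).
  { apply (Rmult_lt_reg_r (3 * INR s)); [lra|]. field_simplify; lra. }
  assert (Hk04 : (3 < k0)%nat) by (apply INR_lt; simpl; lra).
  exists (k0 - 1)%nat, (T0 + 1)%nat.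
  assert (HkR : INR (k0 - 1) = INR k0 - 1) by (rewrite minus_INR by lia; reflexivity).
  repeat split; try lia.
  - rewrite HkR. replace (a / (6 * INR s)) with (a / (3 * INR s) / 2) by (field; lra). lra.
  - assert (Hlt : (2 * s * k0 < T0 + 1)%nat).
    { apply INR_lt. rewrite !mult_INR, plus_INR. simpl INR. lra. }
    nia.
  - rewrite Nat.add_sub, plus_INR, mult_INR, HkR. nra.
  - rewrite plus_INR. simpl INR. lra.
Qed.

Lemma exp_le_mono a b : a <= b -> exp a <= exp b.
Proof.
  intros H. destruct (Rle_lt_or_eq_dec a b H) as [Hlt | ->]; [apply Rlt_le, exp_increasing, Hlt | lra].
Qed.

Lemma pow_exp_ln Q n : 0 < Q -> Q ^ n = exp (INR n * ln Q).
Proof. intros HQ. rewrite <- Rpower_pow by exact HQ. reflexivity. Qed.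

Lemma small_scale_exponents (Q : R) (s : nat) (r : R) :
  2 <= Q -> (1 <= s)%nat -> 0 < r -> r < exp (- (12 * INR s * ln Q)) ->
  exists k T : nat, (1 <= k)%nat /\ 0 <= ln (1 / r) / (6 * INR s * ln Q) <= INR k /\
    (2 * s * k + 2 <= T)%nat /\ Q ^ (T - 1 + s * k) * r <= 1 /\ / Q ^ T <= Rpower r (2 / 3).
Proof.
  intros HQ Hs Hr Hrs.
  assert (HlnQ : 0 < ln Q) by (rewrite <- ln_1; apply ln_increasing; lra).
  assert (HsR : 0 < INR s) by (apply lt_0_INR; lia).
  set (l := ln (1 / r)).
  assert (Hr_exp : r = exp (- l)).
  { unfold l. replace (1 / r) with (/ r) by (field; lra).
    rewrite ln_Rinv, Ropp_involutive, exp_ln by exact Hr. reflexivity. }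
  assert (Hl : 12 * INR s * ln Q < l) by (rewrite Hr_exp in Hrs; apply exp_lt_inv in Hrs; lra).
  destruct (exists_exponents s (l / ln Q) Hs) as [k [T [Hk [HkR [HT [Hsize HTR]]]]]].
  { apply (Rmult_lt_reg_r (ln Q)); [exact HlnQ|]. field_simplify; lra. }
  apply (Rmult_le_compat_r (ln Q)) in Hsize, HTR; try lra.
  replace (l / ln Q * ln Q) with l in Hsize by (field; lra).
  replace (3 * INR T * ln Q) with (3 * (INR T * ln Q)) in HTR by ring.
  replace (2 * (l / ln Q) * ln Q) with (2 * l) in HTR by (field; lra).
  exists k, T. repeat split; auto.
  - apply Rlt_le, Rdiv_lt_0_compat; [|apply Rmult_lt_0_compat]; nra.
  - replace (l / (6 * INR s * ln Q)) with (l / ln Q / (6 * INR s)) by (field; lra). exact HkR.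
  - rewrite pow_exp_ln, Hr_exp, <- exp_plus, <- exp_0 by lra. apply exp_le_mono. lra.
  - rewrite pow_exp_ln, <- exp_Ropp by lra. unfold Rpower. rewrite Hr_exp, ln_exp.
    apply exp_le_mono. lra.
Qed.

Lemma count_lower_bound (len k e : nat) x : 0 <= x -> x <= INR k -> (k ^ e <= 2 * len)%nat ->
  INR len >= x ^ e / 2.
Proof.
  intros Hx Hxk Hlen. apply le_INR in Hlen. rewrite mult_INR, pow_INR in Hlen. simpl (INR 2) in Hlen.
  assert (x ^ e <= INR k ^ e) by (apply pow_incr; lra). lra.
Qed.

Theorem mainTheorem10 (m : nat) (p : nat -> nat)
  (Hm : (2 <= m)%nat)
  (Hp1 : (1 < p 1%nat)%nat)
  (Hinc : forall i j, (1 <= i)%nat -> (i < j)%nat -> (j <= m)%nat -> (p i < p j)%nat)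
  (Hcop : forall i j, (1 <= i <= m)%nat -> (1 <= j <= m)%nat -> i <> j ->
          Nat.gcd (p i) (p j) = 1%nat) :
  exists c rstar : R, 0 < c /\ 0 < rstar /\
    forall r y : R, 0 < r -> r < rstar ->
      Rpower r (2/3) < Rabs y -> Rabs y <= 1/2 ->
      exists L : list nat, NoDup L /\
        (forall h, In h L -> inSr m p r h /\ dist_nint (INR h * y) >= 1 / (3 * INR (p 1%nat))) /\
        INR (length L) >= c * (ln (1 / r)) ^ (m - 1).
Proof.
  assert (Hp : forall l, (1 <= l <= m)%nat -> (1 < p l)%nat).
  { intros l Hl. destruct (Nat.eq_dec l 1) as [->|]; [auto | specialize (Hinc 1%nat l); lia]. }
  assert (Hp_le_last : forall l, (1 <= l <= m)%nat -> (p l <= p m)%nat).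
  { intros l Hl. destruct (Nat.eq_dec l m) as [->|]; [lia | specialize (Hinc l m); lia]. }
  set (s := (p m * (m - 1))%nat). set (Q := INR (p 1%nat)).
  assert (Hs : (1 <= s)%nat) by (unfold s; specialize (Hp m ltac:(lia)); nia).
  assert (HQ : 2 <= Q) by (apply (le_INR 2); exact Hp1).
  assert (HlnQ : 0 < ln Q) by (rewrite <- ln_1; apply ln_increasing; lra).
  assert (Hlam : 0 < 6 * INR s * ln Q) by (generalize (lt_0_INR s ltac:(lia)); nra).
  exists ((/ (6 * INR s * ln Q)) ^ (m - 1) / 2), (exp (- (12 * INR s * ln Q))).
  split; [apply Rmult_lt_0_compat; [apply pow_lt, Rinv_0_lt_compat|]; lra | split; [apply exp_pos|]].
  intros r y Hr Hrs Hy Hy2.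
  destruct (small_scale_exponents Q s r HQ Hs Hr Hrs) as [k [T [Hk [HkR [HT [Hsize HT23]]]]]].
  assert (Hdist : / Q ^ T <= dist_nint y) by (generalize (dist_nint_small y Hy2); lra).
  destruct (good_elements_count m p Hp Hcop Hm Hp_le_last r y k T Hr Hk HT Hsize Hdist)
    as [L [HL1 [HL2 HL3]]].
  exists L. split; [exact HL1 | split; [exact HL2 |]].
  replace ((/ (6 * INR s * ln Q)) ^ (m - 1) / 2 * ln (1 / r) ^ (m - 1))
    with ((ln (1 / r) / (6 * INR s * ln Q)) ^ (m - 1) / 2) by (unfold Rdiv; rewrite Rpow_mult_distr; ring).
  apply count_lower_bound with k; tauto.
Qed.
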